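(* Let $n\ge2$ be even and $q>0$. Let $\omega=(nq,\ldots,nq,-nq,\ldots,-nq)\in\mathbb{R}^n$ (with $n/2$ entries equal to $nq$ followed by $n/2$ entries equal to $-nq$) and $k=(n,\ldots,n)$. Then, counting multiplicity, the number of equilibria $\theta\in(-\pi,\pi]^n$ satisfying $$\omega_\nu=\frac1n\sum_{\mu=1}^nk_\nu k_\mu\sin(\theta_\nu-\theta_\mu)\ (\nu=1,\ldots,n),\qquad \sum_{\mu=1}^nk_\mu e^{i\theta_\mu}\in\mathbb{R}_{\ge0},$$ is exactly $$2^n-\sum_{-q<\ell<q}\binom{n}{n/2+\ell},$$ the sum running over integers $\ell$. Hence the number of equilibria changes precisely at the integers $q=1,2,\ldots,n/2$.
   Context: Each such equilibrium corresponds to a sign pattern $\sigma\in\{-1,+1\}^n$ ($\sigma_\nu=\operatorname{sign}\cos\theta_\nu$) and a value $R=\left(\frac1n\sum_\mu k_\mu\cos\theta_\mu\right)^2>0$ that is a root of $f_\sigma(R)=-R+\frac1n\sum_{\mu=1}^n\sigma_\mu\sqrt{k_\mu^2R-\omega_\mu^2}$; ''counting multiplicity'' means the equilibrium is counted with the multiplicity of $R$ as a root of $f_\sigma$ (so an equilibrium coming from a double root is counted twice). *)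

From HB Require Import structures.
From mathcomp Require Import all_boot all_order all_algebra.
From mathcomp Require Import all_classical all_reals all_analysis.
Set Implicit Arguments. Unset Strict Implicit. Unset Printing Implicit Defensive.
Import Order.TTheory GRing.Theory Num.Theory.
Local Open Scope ring_scope.

Section KuramotoDefs.
Variables (R : realType) (n : nat).

(* theta is an equilibrium in (-pi,pi]^n for frequencies omega and couplings k:
   omega_nu = 1/n sum_mu k_nu k_mu sin(theta_nu - theta_mu), and
   sum_mu k_mu e^{i theta_mu} is a nonnegative real number, i.e. its
   imaginary part sum_mu k_mu sin theta_mu vanishes and its real part
   sum_mu k_mu cos theta_mu is >= 0. *)
Definition is_equilibrium (omega k theta : 'I_n -> R) : Prop :=
  [/\ (forall nu, - pi < theta nu <= pi),
      (forall nu, omega nu =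
          n%:R^-1 * \sum_(mu < n) k nu * k mu * sin (theta nu - theta mu)),
      \sum_(mu < n) k mu * sin (theta mu) = 0 &
      0 <= \sum_(mu < n) k mu * cos (theta mu)].

Definition sign_pattern (theta : 'I_n -> R) : 'I_n -> R :=
  fun nu => if cos (theta nu) < 0 then -1 else 1.

Definition Rval (k theta : 'I_n -> R) : R :=
  (n%:R^-1 * \sum_(mu < n) k mu * cos (theta mu)) ^+ 2.

Definition fsigma (omega k sigma : 'I_n -> R) (x : R) : R :=
  - x + n%:R^-1 * \sum_(mu < n) sigma mu * Num.sqrt (k mu ^+ 2 * x - omega mu ^+ 2).

End KuramotoDefs.

Definition root_mult (R : realType) (f : R -> R) (x : R) (m : nat) : Prop :=
  (forall j, (j < m)%N -> derive1n j f x = 0) /\ derive1n m f x <> 0.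

Definition binomz (n : nat) (j : int) : nat :=
  match j with Posz m => 'C(n, m) | Negz _ => 0%N end.

Definition omega_ex (R : realType) (n : nat) (q : R) : 'I_n -> R :=
  fun nu => if (nu < n./2)%N then n%:R * q else - (n%:R * q).
Definition k_ex (R : realType) (n : nat) : 'I_n -> R := fun _ => n%:R.

From HB Require Import structures.
From mathcomp Require Import all_boot all_order all_algebra.
From mathcomp Require Import all_classical all_reals all_analysis.
From mathcomp Require Import ring lra zify.

Set Implicit Arguments.
Unset Strict Implicit.
Unset Printing Implicit Defensive.

Import Order.TTheory GRing.Theory Num.Theory.
Local Open Scope ring_scope.

(* With k_nu = n and omega_nu = n q eps_nu (eps = +1 on the first half of the
   oscillators, -1 on the second), the equilibrium equations reduce to
   sum_nu sin theta_nu = 0 and C sin theta_nu = eps_nu q with C = sum_nu cos theta_nu > 0.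
   Hence |cos theta_nu| does not depend on nu: cos theta_nu = sigma_nu C / s for the
   sign pattern sigma and s = sum_nu sigma_nu, and C solves (q/C)^2 + (C/s)^2 = 1,
   i.e. C^2 = (s^2 +- s sqrt (s^2 - 4 q^2)) / 2.  So a sign pattern gives two
   equilibria if s > 2q, one if s = 2q and none if s < 2q.  For k and omega as above
   f_sigma(x) = - x + s sqrt (x - q^2), whose root C^2 is simple, except for s = 2q
   where it is double.  With m negative cosines s = n - 2m, so the count is
   2 sum_{m - n/2 <= -q} C(n, m), which by the symmetry m <-> n - m of the binomial
   coefficients is 2^n - sum_{|m - n/2| < q} C(n, m). *)

Section Angle.
Variable R : realType.

Definition angle_of (s c : R) : R := if 0 <= s then acos c else - acos c.

Lemma angle_ofP (s c : R) : s ^+ 2 + c ^+ 2 = 1 ->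
  [/\ sin (angle_of s c) = s, cos (angle_of s c) = c & - pi < angle_of s c <= pi].
Proof.
move=> sc1; have pi_gt0 : 0 < pi :> R := pi_gt0 R.
have c1 : -1 <= c <= 1 by apply/andP; split; nra.
have sin_acos_c : sin (acos c) = `|s| by rewrite sin_acos // -sc1 addrK sqrtr_sqr.
have cos_acos_c : cos (acos c) = c by rewrite acosK // in_itv.
have acos_ge0_c := acos_ge0 c1; have acos_le_pi := acos_lepi c1.
rewrite /angle_of; case: (lerP 0 s) => [s_ge0|s_lt0].
  by rewrite sin_acos_c ger0_norm // cos_acos_c; split => //; apply/andP; split; lra.
have : acos c < pi by apply: acos_ltpi; apply/andP; split; nra.
rewrite sinN cosN sin_acos_c ltr0_norm ?opprK ?cos_acos_c //.
by split => //; apply/andP; split; lra.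
Qed.

Lemma angle_of_sincos (t : R) : - pi < t <= pi -> angle_of (sin t) (cos t) = t.
Proof.
move=> /andP [t_gtNpi t_le_pi]; have pi_gt0 : 0 < pi :> R := pi_gt0 R.
rewrite /angle_of; case: (lerP 0 (sin t)) => [sin_ge0|sin_lt0].
  have t_ge0 : 0 <= t.
    rewrite leNgt; apply/negP => t_lt0.
    have : 0 < sin (- t) by apply: sin_gt0_pi; apply/andP; split; lra.
    by rewrite sinN; lra.
  by rewrite cosK // in_itv /= t_ge0 t_le_pi.
have t_le0 : t <= 0.
  rewrite leNgt; apply/negP => t_gt0.
  have : 0 <= sin t by apply: sin_ge0_pi; apply/andP; split; lra.
  by lra.
by rewrite cosKN ?opprK //; apply/andP; split; lra.
Qed.

End Angle.

Section Amplitude.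
Variables (R : rcfType) (s q : R).

Definition disc : R := Num.sqrt (s ^+ 2 - 4 * q ^+ 2).

(* The two positive solutions C of (q / C)^2 + (C / s)^2 = 1, i.e. of
   C^4 - s^2 C^2 + q^2 s^2 = 0; they coincide when s = 2 q. *)
Definition amp (b : bool) : R := Num.sqrt ((s ^+ 2 + (-1) ^+ b * (s * disc)) / 2).

Lemma sqr_disc : 0 < q -> 2 * q <= s -> disc ^+ 2 = s ^+ 2 - 4 * q ^+ 2.
Proof. by move=> q_gt0 s_ge; rewrite sqr_sqrtr //; nra. Qed.

Lemma amp_radicand_gt0 (b : bool) : 0 < q -> 2 * q <= s ->
  0 < (s ^+ 2 + (-1) ^+ b * (s * disc)) / 2.
Proof.
move=> q_gt0 s_ge; have s_gt0 : 0 < s by nra.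
have disc2 := sqr_disc q_gt0 s_ge; have disc_ge0 : 0 <= disc := sqrtr_ge0 _.
have disc_lt : disc < s by rewrite ltNge; apply/negP => s_le; nra.
by case: b; rewrite ?expr0 ?expr1 ?mul1r ?mulN1r; nra.
Qed.

Lemma circle_sqrE (C : R) : C != 0 -> s != 0 ->
  (q / C) ^+ 2 + (C / s) ^+ 2 = 1 <-> (C ^+ 2) ^+ 2 = s ^+ 2 * C ^+ 2 - q ^+ 2 * s ^+ 2.
Proof.
move=> C_neq0 s_neq0; set X := C ^+ 2.
have Xs_neq0 : X * s ^+ 2 != 0 by rewrite mulf_neq0 ?expf_neq0.
have expand : (q ^+ 2 / X + X / s ^+ 2) * (X * s ^+ 2) = q ^+ 2 * s ^+ 2 + X ^+ 2.
  by field; rewrite s_neq0 expf_neq0.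
rewrite !expr_div_n -/X; split=> [/(congr1 ( *%R^~ (X * s ^+ 2)))|X_root].
  by rewrite expand mul1r; lra.
by apply: (mulIf Xs_neq0); rewrite expand mul1r; lra.
Qed.

Lemma amp_circle (b : bool) : 0 < q -> 2 * q <= s ->
  0 < amp b /\ (q / amp b) ^+ 2 + (amp b / s) ^+ 2 = 1.
Proof.
move=> q_gt0 s_ge; have s_gt0 : 0 < s by nra.
have disc2 := sqr_disc q_gt0 s_ge; have X_gt0 := amp_radicand_gt0 b q_gt0 s_ge.
have amp_gt0 : 0 < amp b by rewrite sqrtr_gt0.
split=> //; apply/circle_sqrE; rewrite ?gt_eqF // sqr_sqrtr ?ltW //.
have e2 : ((-1) ^+ b) ^+ 2 = 1 :> R := sqrr_sign _ _.
set e : R := (-1) ^+ b in e2 *.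
have -> : ((s ^+ 2 + e * (s * disc)) / 2) ^+ 2 =
    (s ^+ 4 + 2 * e * s ^+ 3 * disc + e ^+ 2 * s ^+ 2 * disc ^+ 2) / 4 by field.
by rewrite e2 disc2; field.
Qed.

Lemma circle_amp (C : R) : 0 < q -> 0 < s -> 0 < C ->
  (q / C) ^+ 2 + (C / s) ^+ 2 = 1 ->
  2 * q <= s /\ exists2 b : bool, b ==> (2 * q < s) & C = amp b.
Proof.
move=> q_gt0 s_gt0 C_gt0 /circle_sqrE; rewrite !gt_eqF // => /(_ isT isT).
set X := C ^+ 2 => X_root; have X_gt0 : 0 < X by rewrite exprn_gt0.
have dev : (2 * X - s ^+ 2) ^+ 2 = s ^+ 2 * (s ^+ 2 - 4 * q ^+ 2) by nra.
have s_ge : 2 * q <= s.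
  have : 0 <= s ^+ 2 * (s ^+ 2 - 4 * q ^+ 2) by rewrite -dev sqr_ge0.
  by rewrite pmulr_rge0 ?exprn_gt0 // => ?; nra.
split=> //; have disc2 := sqr_disc q_gt0 s_ge.
have absX : `|2 * X - s ^+ 2| = s * disc.
  by rewrite -sqrtr_sqr dev sqrtrM ?sqr_ge0 // sqrtr_sqr gtr0_norm.
exists (2 * X < s ^+ 2).
  apply/implyP => lt_X; rewrite lt_neqAle s_ge andbT; apply/eqP => s_eq.
  by move: absX; rewrite ltr0_norm ?subr_lt0 // -s_eq /disc; nra.
rewrite /amp -[C]gtr0_norm // -sqrtr_sqr -/X; congr Num.sqrt.
move: absX; case: ltP => [lt_X|le_X].
  by rewrite ltr0_norm ?subr_lt0 // expr1 mulN1r => <-; lra.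
by rewrite ger0_norm ?subr_ge0 // expr0 mul1r => <-; lra.
Qed.

Lemma amp_inj (b b' : bool) : 0 < q -> 2 * q <= s ->
  b ==> (2 * q < s) -> b' ==> (2 * q < s) -> amp b = amp b' -> b = b'.
Proof.
move=> q_gt0 s_ge hb hb' /eqP; rewrite /amp eqr_sqrt ?ltW ?amp_radicand_gt0 //.
have disc2 := sqr_disc q_gt0 s_ge; have s_gt0 : 0 < s by nra.
case: b b' hb hb' => -[] //= => [lt_qs _|_ lt_qs] /eqP;
  rewrite expr0 expr1 mul1r mulN1r => eq_rad; have /eqP : s * disc = 0 by lra.
all: by rewrite mulf_eq0 gt_eqF //= => /eqP disc0; move: disc2; rewrite disc0; nra.
Qed.

End Amplitude.

Section ReducedFsigma.
Variables (R : realType) (c s : R).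

Definition reduced_fsigma (y : R) : R := - y + s * Num.sqrt (y - c).

Lemma is_derive_sqrt_shift (x : R) : c < x ->
  is_derive x 1 (fun y => Num.sqrt (y - c)) (2 * Num.sqrt (x - c))^-1.
Proof.
move=> cx; have xc_gt0 : 0 < x - c by rewrite subr_gt0.
have shift : is_derive x (1 : R) (fun y : R => y - c) 1.
  by rewrite -[1 in X in is_derive _ _ _ X]subr0; apply: is_deriveB.
by have := @is_derive1_comp R Num.sqrt (fun y => y - c) x _ 1 (is_derive1_sqrt xc_gt0) shift;
  rewrite mulr1.
Qed.

Lemma derive1_reduced_fsigma (x : R) : c < x ->
  derive1 reduced_fsigma x = -1 + s * (2 * Num.sqrt (x - c))^-1.
Proof.
move=> cx; rewrite derive1E; apply: derive_val.
by have := @is_deriveD _ _ _ -%R (s \*: (fun y => Num.sqrt (y - c))) x 1 _ _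
  (is_deriveNid x 1) (is_deriveZ s (is_derive_sqrt_shift cx)).
Qed.

Lemma derive2_reduced_fsigma_neq0 (x : R) : c < x -> s != 0 ->
  derive1n 2 reduced_fsigma x != 0.
Proof.
move=> cx s_neq0; set D := 2 * Num.sqrt (x - c).
have D_neq0 : D != 0 by rewrite mulf_neq0 // gt_eqF // sqrtr_gt0 subr_gt0.
have dD : is_derive x (1 : R) (fun y => 2 * Num.sqrt (y - c)) (2 * D^-1).
  by have := is_deriveZ 2 (is_derive_sqrt_shift cx).
have dDinv := @is_deriveV R (fun y => 2 * Num.sqrt (y - c)) x _ 1 D_neq0 dD.
have -> : derive1n 2 reduced_fsigma x = s * (- D ^- 2 * (2 * D^-1)).
  rewrite /= derive1E.
  rewrite (@near_eq_derive _ _ _ _ (fun y => -1 + s * (2 * Num.sqrt (y - c))^-1)).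
    apply: derive_val.
    by have := is_deriveD (is_derive_cst (-1 : R) x 1) (is_deriveZ s dDinv); rewrite add0r.
  by near=> y; apply: derive1_reduced_fsigma; near: y; exact: lt_nbhsr.
by rewrite !mulf_neq0 ?oppr_eq0 ?invr_eq0 ?expf_neq0 ?pnatr_eq0.
Unshelve. all: by end_near. Qed.

Lemma root_mult_reduced_fsigma (X : R) : c < X -> X = s * Num.sqrt (X - c) ->
  root_mult reduced_fsigma X (if s ^+ 2 == 4 * c then 2 else 1).
Proof.
move=> cX rootX; set D := Num.sqrt (X - c) in rootX.
have D_gt0 : 0 < D by rewrite sqrtr_gt0 subr_gt0.
have D2 : D ^+ 2 = X - c by rewrite sqr_sqrtr // subr_ge0 ltW.
have F0 : reduced_fsigma X = 0 by rewrite /reduced_fsigma -/D -rootX addNr.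
have F1 := derive1_reduced_fsigma cX; rewrite -/D in F1.
have D_neq0 : 2 * D != 0 by rewrite mulf_neq0 // gt_eqF.
have F1_eq0 : (derive1 reduced_fsigma X == 0) = (s == 2 * D).
  rewrite F1; apply/eqP/eqP => [F1_0|->]; last by rewrite mulfV // addNr.
  by apply: divr1_eq; move/eqP: F1_0; rewrite addrC subr_eq0 => /eqP.
case: eqP => [s2E|s2N]; split.
- have sE : s = 2 * D by nra.
  by case=> [|[|]] //= _; apply/eqP; rewrite F1_eq0 sE.
- by apply/eqP/derive2_reduced_fsigma_neq0 => //; rewrite gt_eqF //; nra.
- by case.
- by move=> /eqP; rewrite /= F1_eq0 => /eqP sE; apply: s2N; nra.
Qed.

End ReducedFsigma.

Lemma card_sets_by_card (T : finType) (P : pred nat) :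
  #|[set A : {set T} | P #|A|]| = (\sum_(m < #|T|.+1 | P m) 'C(#|T|, m))%N.
Proof.
rewrite -sum1_card (partition_big (fun A : {set T} => inord #|A| : 'I_#|T|.+1) P) /=;
  last by move=> A; rewrite inE inordK // ltnS max_card.
apply: eq_bigr => m Pm; rewrite -(card_draws T m) -[#|[set A : {set T} | _]|]sum1_card.
apply: eq_bigl => A; rewrite !inE -(inj_eq val_inj) /= inordK ?ltnS ?max_card //.
by case: eqP => [->|_]; rewrite ?Pm ?andbF.
Qed.

Lemma sum_binomial (n : nat) : (\sum_(m < n.+1) 'C(n, m) = 2 ^ n)%N.
Proof.
by rewrite -[in RHS](add1n 1) expnDn; apply: eq_bigr => m _; rewrite !exp1n !muln1.
Qed.

Lemma binomz_neg (n : nat) (j : int) : j < 0 -> binomz n j = 0%N.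
Proof. by case: j. Qed.

Lemma sum_binomz_shift (n h : nat) (P : pred int) : (h <= n)%N ->
  \sum_(i < (2 * n).+1 | P (i%:Z - n%:Z)) (binomz n (h%:Z + (i%:Z - n%:Z)))%:Z =
  \sum_(m < n.+1 | P (m%:Z - h%:Z)) ('C(n, m))%:Z.
Proof.
move=> hn; set F := fun i : nat =>
  if P (i%:Z - n%:Z) then (binomz n (h%:Z + (i%:Z - n%:Z)))%:Z else 0.
rewrite big_mkcond -(big_mkord xpredT F) /=.
(* F i vanishes unless 0 <= h + i - n <= n, i.e. unless n - h <= i < n - h + n.+1. *)
rewrite (big_cat_nat _ (n := n - h)) //=; last by lia.
rewrite [X in _ + X](big_cat_nat _ (n := n - h + n.+1)) ?leq_addr //=; last by lia.
rewrite big_nat_cond big1 ?add0r; last first.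
  move=> i /andP[/andP[_ i_lt] _].
  by rewrite /F; case: ifP => // _; rewrite binomz_neg //; lia.
rewrite [X in _ + X]big_nat_cond [X in _ + X]big1 ?addr0; last first.
  move=> i /andP[/andP[i_ge _] _].
  rewrite /F; case: ifP => // _.
  have -> : h%:Z + (i%:Z - n%:Z) = Posz (h + i - n)%N by lia.
  by rewrite /= bin_small //; lia.
rewrite -{1}(add0n (n - h)%N) big_addn addKn big_mkord [RHS]big_mkcond; apply: eq_bigr => m _.
rewrite /F (_ : Posz (m + (n - h))%N - n%:Z = m%:Z - h%:Z); last by lia.
by case: ifP => // _; rewrite (_ : h%:Z + (m%:Z - h%:Z) = m%:Z); last by lia.
Qed.

Section BinomialTails.
Variables (R : realFieldType) (n h : nat) (q : R).

Let d (m : nat) : R := (m%:Z - h%:Z)%:~R.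

Lemma sum_binomial_reflect (P : pred R) : n = (h + h)%N ->
  (\sum_(m < n.+1 | P (d m)) 'C(n, m) = \sum_(m < n.+1 | P (- d m)) 'C(n, m))%N.
Proof.
move=> n_eq; rewrite (reindex_inj rev_ord_inj) /=; apply: eq_big => m; rewrite subSS.
  have m_lt := ltn_ord m.
  by rewrite /d -mulrNz (_ : (n - m)%N%:Z - h%:Z = - (m%:Z - h%:Z)) //; lia.
by rewrite bin_sub // -ltnS.
Qed.

Lemma binomial_tails_middle : n = (h + h)%N -> 0 < q ->
  (2 * \sum_(m < n.+1 | (d m <= - q)%R) 'C(n, m)
   + \sum_(m < n.+1 | (- q < d m < q)%R) 'C(n, m) = 2 ^ n)%N.
Proof.
move=> n_eq q_gt0.
rewrite -sum_binomial [RHS](bigID (fun m : 'I_n.+1 => (d m <= - q)%R)) /=.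
rewrite mul2n -addnn -addnA; congr (_ + _)%N.
rewrite [RHS](bigID (fun m : 'I_n.+1 => (q <= d m)%R)) /=; congr (_ + _)%N.
  rewrite (sum_binomial_reflect (fun x => x <= - q) n_eq); apply: eq_bigl => m.
  rewrite /= lerN2; case: (lerP (d m) (- q)) => //= low.
  by apply/negbTE; rewrite -ltNge; lra.
by apply: eq_bigl => m; rewrite -!ltNge.
Qed.

End BinomialTails.

Section KuramotoExample.
Variables (R : realType) (n : nat) (q : R).
Hypotheses (n_ge2 : (2 <= n)%N) (n_even : ~~ odd n) (q_gt0 : 0 < q).

Local Notation omega := (@omega_ex R n q).
Local Notation k := (@k_ex R n).

Definition freq_sign (nu : 'I_n) : R := (-1) ^+ (n./2 <= nu)%N.

Definition cos_sign (A : {set 'I_n}) (nu : 'I_n) : R := (-1) ^+ (nu \in A).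

Definition cos_sign_sum (A : {set 'I_n}) : R := \sum_nu cos_sign A nu.

Lemma n_half : n = (n./2 + n./2)%N.
Proof. by rewrite addnn -[in LHS](odd_double_half n) (negbTE n_even). Qed.

Lemma n_gt0 : (0 < n)%N.
Proof. exact: leq_trans n_ge2. Qed.

Lemma natn_neq0 : n%:R != 0 :> R.
Proof. by rewrite pnatr_eq0 -lt0n n_gt0. Qed.

Lemma omega_exE (nu : 'I_n) : omega nu = n%:R * (freq_sign nu * q).
Proof. by rewrite /omega_ex /freq_sign; case: leqP; rewrite ?mul1r ?mulN1r ?mulrN. Qed.

Lemma sum_freq_sign : \sum_nu freq_sign nu = 0.
Proof.
rewrite -(big_mkord xpredT (fun i => (-1) ^+ (n./2 <= i)%N : R)).
rewrite (big_cat_nat _ (n := n./2)) //=; last by rewrite {2}n_half leq_addr.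
rewrite big_nat_cond [X in _ + X]big_nat_cond.
rewrite (eq_bigr (fun=> 1)) => [|i /andP[/andP[_ i_lt] _]]; last by rewrite leqNgt i_lt.
rewrite [X in _ + X](eq_bigr (fun=> -1)) => [|i /andP[/andP[i_ge _] _]]; last by rewrite i_ge.
rewrite -!big_nat_cond !sumr_const_nat subn0.
by rewrite {2}n_half addnK mulNrn subrr.
Qed.

Lemma cos_sign_sumE (A : {set 'I_n}) : cos_sign_sum A = n%:R - 2 * #|A|%:R.
Proof.
rewrite /cos_sign_sum (bigID (mem A)) /=.
rewrite (eq_bigr (fun=> -1)) => [|nu nuA]; last by rewrite /cos_sign nuA.
rewrite [X in _ + X](eq_bigr (fun=> 1)) => [|nu /negbTE nuA]; last by rewrite /cos_sign nuA.
rewrite !sumr_const -(eq_card (fun nu : 'I_n => finset.in_setC nu A)) mulNrn.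
have cardAC := cardsC A; rewrite card_ord in cardAC.
by rewrite -[X in X%:R - _]cardAC natrD; lra.
Qed.

Lemma is_equilibriumE (theta : 'I_n -> R) :
  is_equilibrium omega k theta <->
  [/\ (forall nu, - pi < theta nu <= pi),
      \sum_nu sin (theta nu) = 0,
      0 <= \sum_nu cos (theta nu) &
      forall nu, sin (theta nu) * \sum_mu cos (theta mu) = freq_sign nu * q].
Proof.
have sum_k (f : 'I_n -> R) : \sum_mu k mu * f mu = n%:R * \sum_mu f mu by rewrite mulr_sumr.
have coupling nu : n%:R^-1 * \sum_mu k nu * k mu * sin (theta nu - theta mu) =
    n%:R * (sin (theta nu) * \sum_mu cos (theta mu) - cos (theta nu) * \sum_mu sin (theta mu)).
  rewrite !mulr_sumr -sumrB mulr_sumr; apply: eq_bigr => mu _.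
  by rewrite /k_ex sinB; field; exact: natn_neq0.
rewrite /is_equilibrium !sum_k pmulr_rge0 ?ltr0n ?n_gt0 //.
split=> [[range eqs sin0 cos_ge0]|[range sin0 cos_ge0 eqs]].
  have {}sin0 : \sum_nu sin (theta nu) = 0.
    by move/eqP: sin0; rewrite mulf_eq0 (negbTE natn_neq0) => /eqP.
  split=> // nu; apply: (mulfI natn_neq0).
  by rewrite -omega_exE eqs coupling sin0 mulr0 subr0.
split=> // [nu|]; last by rewrite sin0 mulr0.
by rewrite omega_exE coupling sin0 mulr0 subr0 eqs.
Qed.

Lemma fsigma_exE (sigma : 'I_n -> R) :
  fsigma omega k sigma = reduced_fsigma (q ^+ 2) (\sum_mu sigma mu).
Proof.
apply/funext => x; rewrite /fsigma /reduced_fsigma mulr_suml mulr_sumr; congr (_ + _).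
apply: eq_bigr => mu _.
have -> : k mu ^+ 2 * x - omega mu ^+ 2 = n%:R ^+ 2 * (x - q ^+ 2).
  by rewrite omega_exE /k_ex !exprMn sqrr_sign mul1r; ring.
rewrite sqrtrM ?sqr_ge0 // sqrtr_sqr ger0_norm //.
by field; exact: natn_neq0.
Qed.

(* The equilibrium whose cosines have the signs of [cos_sign A] and whose
   amplitude C = sum_nu cos theta_nu = n sqrt R is the root [amp _ q b]:
   sin theta_nu = freq_sign nu q / C and cos theta_nu = cos_sign A nu C / s,
   where s = cos_sign_sum A. *)
Definition equilibrium (A : {set 'I_n}) (b : bool) : {ffun 'I_n -> R} :=
  let C := amp (cos_sign_sum A) q b in
  [ffun nu => angle_of (freq_sign nu * q / C) (cos_sign A nu * C / cos_sign_sum A)].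

Definition multiplicity (A : {set 'I_n}) : nat :=
  if cos_sign_sum A == 2 * q then 2 else 1.

Section Equilibrium.
Variables (A : {set 'I_n}) (b : bool).
Hypothesis sA_ge : 2 * q <= cos_sign_sum A.

Let s := cos_sign_sum A.
Let C := amp s q b.
Let theta := equilibrium A b.

Let s_gt0 : 0 < s.
Proof. by apply: lt_le_trans sA_ge; rewrite mulr_gt0. Qed.

Let C_gt0 : 0 < C.
Proof. by case: (amp_circle b q_gt0 sA_ge). Qed.

Let circle : (q / C) ^+ 2 + (C / s) ^+ 2 = 1.
Proof. by case: (amp_circle b q_gt0 sA_ge). Qed.

Lemma equilibrium_sincos (nu : 'I_n) :
  [/\ sin (theta nu) = freq_sign nu * q / C,
      cos (theta nu) = cos_sign A nu * C / s & - pi < theta nu <= pi].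
Proof.
rewrite ffunE; apply: angle_ofP.
by rewrite -!mulrA !exprMn !sqrr_sign !mul1r -circle !exprMn.
Qed.

Lemma sum_sin_equilibrium : \sum_nu sin (theta nu) = 0.
Proof.
rewrite (eq_bigr (fun nu => freq_sign nu * (q / C))) => [|nu _].
  by rewrite -mulr_suml sum_freq_sign mul0r.
by have [-> _ _] := equilibrium_sincos nu; rewrite mulrA.
Qed.

Lemma sum_cos_equilibrium : \sum_nu cos (theta nu) = C.
Proof.
rewrite (eq_bigr (fun nu => cos_sign A nu * (C / s))) => [|nu _].
  by rewrite -mulr_suml -/(cos_sign_sum A) -/s mulrCA divff ?mulr1 // gt_eqF.
by have [_ -> _] := equilibrium_sincos nu; rewrite mulrA.
Qed.

Lemma equilibrium_is_equilibrium : is_equilibrium omega k theta.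
Proof.
apply/is_equilibriumE; split.
- by move=> nu; case: (equilibrium_sincos nu).
- exact: sum_sin_equilibrium.
- by rewrite sum_cos_equilibrium ltW.
- move=> nu; have [-> _ _] := equilibrium_sincos nu.
  by rewrite sum_cos_equilibrium divfK // gt_eqF.
Qed.

Lemma sign_pattern_equilibrium : sign_pattern theta = cos_sign A.
Proof.
apply/funext => nu; rewrite /sign_pattern; have [_ -> _] := equilibrium_sincos nu.
rewrite /cos_sign -mulrA pmulr_llt0 ?divr_gt0 // signr_lt0.
by case: (nu \in A).
Qed.

Lemma Rval_equilibrium : Rval k theta = C ^+ 2.
Proof. by rewrite /Rval /k_ex -mulr_sumr sum_cos_equilibrium mulKf // natn_neq0. Qed.

Lemma root_mult_equilibrium :
  root_mult (fsigma omega k (sign_pattern theta)) (Rval k theta) (multiplicity A).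
Proof.
rewrite sign_pattern_equilibrium fsigma_exE -/(cos_sign_sum A) -/s Rval_equilibrium.
have C_ne0 : C != 0 by rewrite gt_eqF.
have shifted : C ^+ 2 - q ^+ 2 = (C ^+ 2 / s) ^+ 2.
  have q2 : q ^+ 2 = C ^+ 2 * (1 - (C / s) ^+ 2).
    by rewrite -circle addrK expr_div_n; field.
  by rewrite q2; field; rewrite gt_eqF.
have sqr_eq : (s ^+ 2 == 4 * q ^+ 2) = (s == 2 * q).
  by rewrite (_ : 4 * q ^+ 2 = (2 * q) ^+ 2) ?eqrXn2 ?ltW ?mulr_gt0 //; ring.
rewrite /multiplicity -/s -sqr_eq; apply: root_mult_reduced_fsigma.
  by rewrite -subr_gt0 shifted exprn_gt0 // divr_gt0 // exprn_gt0.
by rewrite shifted sqrtr_sqr gtr0_norm ?divr_gt0 ?exprn_gt0 // mulrC divfK // gt_eqF.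
Qed.

End Equilibrium.

(* When the two roots [amp s q true] and [amp s q false] coincide (s = 2 q),
   only [b = false] is kept. *)
Definition admissible (A : {set 'I_n}) (b : bool) : bool :=
  (2 * q <= cos_sign_sum A) && (b ==> (2 * q < cos_sign_sum A)).

Lemma equilibrium_classify (theta : {ffun 'I_n -> R}) :
  is_equilibrium omega k theta -> exists A b, admissible A b /\ theta = equilibrium A b.
Proof.
move/is_equilibriumE => [range sin0 cos_ge0 eqs]; set C := \sum_nu cos (theta nu) in cos_ge0 eqs.
have nu0 : 'I_n := Ordinal n_gt0.
have C_gt0 : 0 < C.
  rewrite lt_def cos_ge0 andbT; apply/eqP => C0; move: (eqs nu0).
  by rewrite C0 mulr0 => /esym/eqP; rewrite mulf_eq0 signr_eq0 gt_eqF.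
have sinE nu : sin (theta nu) = freq_sign nu * q / C by rewrite -eqs mulfK // gt_eqF.
set A := [set nu | cos (theta nu) < 0]; set r := Num.sqrt (1 - (q / C) ^+ 2).
have cosE nu : cos (theta nu) = cos_sign A nu * r.
  rewrite [LHS]realEsign ?num_real // /cos_sign inE; congr (_ * _).
  by rewrite -sqrtr_sqr cos2sin2 sinE -mulrA exprMn sqrr_sign mul1r.
have C_eq : C = cos_sign_sum A * r by rewrite /C (eq_bigr _ (fun nu _ => cosE nu)) -mulr_suml.
have r_ge0 : 0 <= r := sqrtr_ge0 _.
have s_gt0 : 0 < cos_sign_sum A.
  rewrite ltNge; apply/negP => s_le0; move: C_gt0.
  by rewrite C_eq ltNge mulr_le0_ge0.
have rE : r = C / cos_sign_sum A by rewrite C_eq mulrC mulKf // gt_eqF.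
have circle : (q / C) ^+ 2 + (C / cos_sign_sum A) ^+ 2 = 1.
  by move: (cos2Dsin2 (theta nu0)); rewrite cosE sinE rE addrC -mulrA !exprMn !sqrr_sign !mul1r.
have [s_ge [b hb C_amp]] := circle_amp q_gt0 s_gt0 C_gt0 circle.
exists A, b; split; first by rewrite /admissible s_ge.
apply/ffunP => nu; rewrite ffunE -[LHS](angle_of_sincos (range nu)).
by rewrite sinE cosE rE -C_amp mulrA.
Qed.

Lemma equilibrium_inj (A A' : {set 'I_n}) (b b' : bool) :
  admissible A b -> admissible A' b' -> equilibrium A b = equilibrium A' b' -> A = A' /\ b = b'.
Proof.
move=> /andP[sA_ge hb] /andP[sA'_ge hb'] eq_theta.
have signs : cos_sign A = cos_sign A'.
  by rewrite -(sign_pattern_equilibrium b sA_ge) eq_theta sign_pattern_equilibrium.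
have AA' : A = A'.
  by apply/setP => nu; apply: (@signr_inj R); exact: (congr1 (fun f => f nu) signs).
subst A'; split => //; apply: (amp_inj q_gt0 sA_ge hb hb').
have nu0 : 'I_n := Ordinal n_gt0.
have [sin_b _ _] := equilibrium_sincos b sA_ge nu0.
have [sin_b' _ _] := equilibrium_sincos b' sA_ge nu0.
have fq_neq0 : freq_sign nu0 * q != 0 by rewrite mulf_neq0 ?signr_eq0 // gt_eqF.
by move: sin_b; rewrite eq_theta sin_b' => /(mulfI fq_neq0)/invr_inj.
Qed.

Definition equilibria : seq ({ffun 'I_n -> R} * nat) :=
  [seq (equilibrium x.1 x.2, multiplicity x.1) |
     x <- enum [pred x : {set 'I_n} * bool | admissible x.1 x.2]].

Lemma uniq_equilibria : uniq (map fst equilibria).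
Proof.
rewrite -map_comp map_inj_in_uniq ?enum_uniq // => -[A b] [A' b'].
by rewrite !mem_enum !inE /= => adm_Ab adm_Ab' /(equilibrium_inj adm_Ab adm_Ab') [-> ->].
Qed.

Lemma mem_equilibria (theta : {ffun 'I_n -> R}) :
  theta \in map fst equilibria <-> is_equilibrium omega k theta.
Proof.
split.
  case/mapP => p /mapP [[A b]]; rewrite mem_enum inE => /andP[sA_ge _] -> ->.
  exact: equilibrium_is_equilibrium.
case/equilibrium_classify => A [b [adm_Ab ->]].
apply/mapP; exists (equilibrium A b, multiplicity A) => //.
by apply/mapP; exists (A, b); rewrite ?mem_enum.
Qed.

Lemma root_mult_equilibria (p : {ffun 'I_n -> R} * nat) : p \in equilibria ->
  root_mult (fsigma omega k (sign_pattern p.1)) (Rval k p.1) p.2.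
Proof.
by case/mapP => -[A b]; rewrite mem_enum inE => /andP[sA_ge _] ->; apply: root_mult_equilibrium.
Qed.

Lemma sum_multiplicity :
  (\sum_(p <- equilibria) p.2 = 2 * #|[set A : {set 'I_n} | (2 * q <= cos_sign_sum A)%R]|)%N.
Proof.
rewrite big_map big_enum /= (eq_bigl (fun x => xpredT x.1 && admissible x.1 x.2)) //.
rewrite -(pair_big_dep xpredT admissible (fun A _ => multiplicity A)) /=.
rewrite mulnC -sum_nat_cond_const [RHS]big_mkcond; apply: eq_bigr => A _.
by rewrite big_mkcond big_bool /admissible /multiplicity /=; case: ltgtP.
Qed.

Lemma card_cos_sign_sum_ge :
  #|[set A : {set 'I_n} | 2 * q <= cos_sign_sum A]| =
  (\sum_(m < n.+1 | ((m%:Z - (n./2)%:Z)%:~R <= - q :> R)) 'C(n, m))%N.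
Proof.
have nE : n%:R = 2 * (n./2)%:R :> R by rewrite {1}n_half natrD; ring.
transitivity #|[set A : {set 'I_n} | ((#|A|%:Z - (n./2)%:Z)%:~R <= - q :> R)]|.
  apply: eq_card => A; rewrite !inE.
  by rewrite cos_sign_sumE nE intrB -!pmulrn; apply/idP/idP => ?; lra.
by rewrite (@card_sets_by_card _ (fun m : nat => (m%:Z - (n./2)%:Z)%:~R <= - q :> R)) card_ord.
Qed.

End KuramotoExample.

Theorem theorem4 (R : realType) (n : nat) (q : R) :
  (2 <= n)%N -> ~~ odd n -> 0 < q ->
  exists s : seq ({ffun 'I_n -> R} * nat),
    [/\ uniq (map fst s),
        (forall theta : {ffun 'I_n -> R},
            theta \in map fst s <-> is_equilibrium (@omega_ex R n q) (@k_ex R n) theta),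
        (forall p, p \in s ->
            root_mult (fsigma (@omega_ex R n q) (@k_ex R n) (sign_pattern p.1))
                      (Rval (@k_ex R n) p.1) p.2) &
        ((\sum_(p <- s) p.2)%:Z =
           (2 ^ n)%:Z -
           \sum_(i < (2 * n).+1 |
                   (- q < ((i%:Z - n%:Z)%:~R : R)) && (((i%:Z - n%:Z)%:~R : R) < q))
              (binomz n ((n./2)%:Z + (i%:Z - n%:Z)))%:Z)%R].
Proof.
move=> n_ge2 n_even q_gt0; exists (equilibria n q); split.
- exact: uniq_equilibria.
- exact: mem_equilibria n_ge2 n_even q_gt0.
- exact: root_mult_equilibria n_ge2 q_gt0.
rewrite sum_multiplicity card_cos_sign_sum_ge //.
have half_le : (n./2 <= n)%N by rewrite {2}(n_half n_even) leq_addr.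
rewrite (sum_binomz_shift (fun l : int => (- q < l%:~R) && (l%:~R < q)) half_le).
rewrite -(binomial_tails_middle (n_half n_even) q_gt0) PoszD (big_morph _ PoszD (erefl 0%:Z)).
by rewrite addrK.
Qed.
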